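(* Let $S$ be an optimal $n$-town placed in normalized position. If $i\ge0$ and $S$ contains the points $(i,c_i^+)$ and $(i,c_i^-)$, then every grid point of the rectangle $[-i,i]\times[c_i^-,c_i^+]$ belongs to $S$. Similarly, if $i\ge1$ and $S$ contains the points $(-i,c_{-i}^+)$ and $(-i,c_{-i}^-)$, then every grid point of the rectangle $[-i,i-1]\times[c_{-i}^-,c_{-i}^+]$ belongs to $S$.
   Context: An $n$-town is a set $S\subset\mathbb{Z}\times\mathbb{Z}$ of exactly $n$ distinct grid points; its cost is $c(S)=\frac12\sum_{s\in S}\sum_{t\in S}\|s-t\|_1$ (Manhattan distance), and it is optimal if its cost is minimum among all $n$-towns. Rows $R_i=\{(x,i)\in S\}$ and columns $C_i=\{(i,y)\in S\}$; the center of a nonempty row (column) is the midpoint between its extreme points. $S$ is in normalized position if the centers of all rows of odd cardinality lie on the $y$-axis, the centers of all rows of even cardinality lie on the line $x=-\frac12$, the centers of all columns of odd cardinality lie on the $x$-axis, and the centers of all columns of even cardinality lie on the line $y=-\frac12$. For a nonempty column $C_i$, $c_i^+$ and $c_i^-$ denote the $y$-coordinates of its topmost and bottommost points. *)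

From HB Require Import structures.
From mathcomp Require Import all_boot all_order all_algebra.
From mathcomp Require Import finmap.
Set Implicit Arguments. Unset Strict Implicit. Unset Printing Implicit Defensive.
Import Order.TTheory GRing.Theory Num.Theory.
Local Open Scope ring_scope.
Local Open Scope fset_scope.

Definition point := (int * int)%type.
Definition town := {fset point}.

Definition manh (s t : point) : int := `|s.1 - t.1| + `|s.2 - t.2|.

Definition cost (S : town) : rat :=
  (\sum_(s <- S) \sum_(t <- S) (manh s t)%:~R) / 2.

Definition is_town (n : nat) (S : town) : Prop := #|` S| = n.

Definition optimal (n : nat) (S : town) : Prop :=
  is_town n S /\ forall T : town, is_town n T -> cost S <= cost T.

Definition row (S : town) (j : int) : town := [fset p in S | p.2 == j].
Definition col (S : town) (i : int) : town := [fset p in S | p.1 == i].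

Definition center (a b : int) : rat := (a + b)%:~R / 2.

Definition row_extremes (S : town) (j a b : int) : Prop :=
  (a, j) \in S /\ (b, j) \in S /\ forall x, (x, j) \in S -> a <= x <= b.

Definition col_extremes (S : town) (i a b : int) : Prop :=
  (i, a) \in S /\ (i, b) \in S /\ forall y, (i, y) \in S -> a <= y <= b.

Definition normalized (S : town) : Prop :=
  (forall j a b, row_extremes S j a b ->
     center a b = (if odd #|` row S j| then 0 else - (1 / 2))) /\
  (forall i a b, col_extremes S i a b ->
     center a b = (if odd #|` col S i| then 0 else - (1 / 2))).

(** Two facts about an optimal town drive the proof. First, rows and
    columns have no gaps: if a point q strictly between two points of a line
    of S were missing, then moving either endpoint to q would not decrease
    the cost; each of these two moves forces the points of S strictly beyond
    q on that endpoint's side to outnumber all the others, which cannot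
    happen on both sides at once. Second, in normalized position the
    extremes [a <= b] of every row satisfy [a + b = 0] or [a + b = -1], so a
    row through [(c, y)] spans both [[-c, c]] and [[c, -c - 1]]. Hence column
    [i] contains [(i, y)] for every [y] between its extremes, and the row
    through that point covers the required range of [x]. *)

From HB Require Import structures.
From mathcomp Require Import all_boot all_order all_algebra.
From mathcomp Require Import finmap.
From mathcomp Require Import zify.
Set Implicit Arguments. Unset Strict Implicit. Unset Printing Implicit Defensive.
Import Order.TTheory GRing.Theory Num.Theory.
Local Open Scope fset_scope.
Local Open Scope ring_scope.

Arguments manh : simpl never.

Definition dist_sum (A : town) : int := \sum_(s <- A) \sum_(t <- A) manh s t.

Lemma manhC s t : manh s t = manh t s.
Proof. by rewrite /manh (distrC s.1) (distrC s.2). Qed.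

Lemma manhxx s : manh s s = 0.
Proof. by rewrite /manh !subrr. Qed.

Lemma costE A : cost A = (dist_sum A)%:~R / 2.
Proof.
rewrite /cost /dist_sum rmorph_sum; congr (_ / _).
by apply: eq_bigr => s _; rewrite rmorph_sum.
Qed.

Lemma dist_sumU1 r A : r \notin A ->
  dist_sum (r |` A) = dist_sum A + 2 * \sum_(t <- A) manh r t.
Proof.
move=> rA; rewrite /dist_sum big_fsetU1 //= big_fsetU1 //= manhxx add0r.
rewrite [X in _ + X](eq_bigr (fun s => manh r s + \sum_(t <- A) manh s t)).
  by rewrite [X in _ + X = _]big_split /= mulr_natl mulr2n addrA addrC.
by move=> s _; rewrite big_fsetU1 // manhC.
Qed.

Lemma optimal_relocate_ge0 n S p q : optimal n S -> p \in S -> q \notin S ->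
  0 <= \sum_(t <- S `\ p) (manh q t - manh p t).
Proof.
move=> [cardS minS] pS qS.
have qSp : q \notin S `\ p by rewrite in_fsetD1 negb_and qS orbT.
have pSp : p \notin S `\ p by rewrite fsetD11.
have townT : is_town n (q |` (S `\ p)).
  by rewrite /is_town cardfsU1 qSp add1n -cardS (cardfsD1 p S) pS.
have := minS _ townT; rewrite !costE -{1}(fsetD1K pS) !dist_sumU1 //.
rewrite ler_pM2r // ler_int lerD2l ler_pM2l // => le_sums.
by rewrite big_split sumrN subr_ge0.
Qed.

Lemma abs_subB_le (u v w : int) : u < v ->
  `|u - w| - `|v - w| <= (v - u) * (if u < w then 1 else -1).
Proof. by case: ifP; lia. Qed.

(* The hypothesis on [manh] says that [p] and [q] differ only in the
   coordinate [pi]. *)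
Lemma optimal_relocate_majority n S (pi : point -> int) p q :
  optimal n S -> p \in S -> q \notin S -> pi q < pi p ->
  (forall t, manh q t - manh p t = `|pi q - pi t| - `|pi p - pi t|) ->
  0 < \sum_(t <- S) (if pi q < pi t then 1 else -1 : int).
Proof.
move=> optS pS qS qp manhE.
rewrite (big_fsetD1 _ pS) /= qp ltr_pwDl //.
have : 0 <= (pi p - pi q) * \sum_(t <- S `\ p) (if pi q < pi t then 1 else -1).
  apply: le_trans (optimal_relocate_ge0 optS pS qS) _.
  by rewrite mulr_sumr; apply: ler_sum => t _; rewrite manhE abs_subB_le.
by rewrite pmulr_rge0 ?subr_gt0.
Qed.

Lemma optimal_line_convex n S (pi : point -> int) pa pb q :
  optimal n S -> pa \in S -> pb \in S -> pi pa < pi q < pi pb ->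
  (forall t, manh q t - manh pa t = `|pi q - pi t| - `|pi pa - pi t|) ->
  (forall t, manh q t - manh pb t = `|pi q - pi t| - `|pi pb - pi t|) ->
  q \in S.
Proof.
move=> optS paS pbS /andP[aq qb] manhEa manhEb; apply: contraT => qS.
have beyond_b := optimal_relocate_majority optS pbS qS qb manhEb.
have beyond_a := optimal_relocate_majority (pi := fun t => - pi t) optS paS qS.
have {}beyond_a : 0 < \sum_(t <- S) (if pi t < pi q then 1 else -1 : int).
  rewrite (eq_bigr (fun t => if - pi q < - pi t then 1 else -1)).
    by apply: beyond_a; [rewrite ltrN2 | move=> t; rewrite manhEa -!opprD !normrN].
  by move=> t _; rewrite ltrN2.
have : \sum_(t <- S) ((if pi q < pi t then 1 else -1) +
                      (if pi t < pi q then 1 else -1)) <= 0 :> int.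
  by apply: sumr_le0 => t _; do 2 case: ifP; lia.
by rewrite big_split /= leNgt (addr_gt0 beyond_b beyond_a).
Qed.

Lemma optimal_row_convex n S (a b x y : int) : optimal n S ->
  (a, y) \in S -> (b, y) \in S -> a <= x <= b -> (x, y) \in S.
Proof.
move=> optS aS bS /andP[ax xb].
have [<-|ax'] := eqVneq a x; first by [].
have [->|xb'] := eqVneq x b; first by [].
apply: (optimal_line_convex (pi := fst) optS aS bS); rewrite /manh /=.
- by rewrite !lt_neqAle ax' xb' ax xb.
- by move=> t; lia.
- by move=> t; lia.
Qed.

Lemma optimal_col_convex n S (a b x y : int) : optimal n S ->
  (x, a) \in S -> (x, b) \in S -> a <= y <= b -> (x, y) \in S.
Proof.
move=> optS aS bS /andP[ay yb].
have [<-|ay'] := eqVneq a y; first by [].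
have [->|yb'] := eqVneq y b; first by [].
apply: (optimal_line_convex (pi := snd) optS aS bS); rewrite /manh /=.
- by rewrite !lt_neqAle ay' yb' ay yb.
- by move=> t; lia.
- by move=> t; lia.
Qed.

Lemma row_extremes_exist S (x0 y : int) : (x0, y) \in S ->
  exists a b, row_extremes S y a b.
Proof.
move=> x0S.
pose a := \big[Order.min/x0]_(p <- S | p.2 == y) p.1.
pose b := \big[Order.max/x0]_(p <- S | p.2 == y) p.1.
have in_row (op : int -> int -> int) : (forall u v, op u v = u \/ op u v = v) ->
    (\big[op/x0]_(p <- S | p.2 == y) p.1, y) \in S.
  move=> opE; rewrite big_seq_cond.
  apply: (big_ind (fun m => (m, y) \in S)) => // [u v uS vS|p /andP[pS /eqP <-]].
  - by case: (opE u v) => ->.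
  - by rewrite -surjective_pairing.
exists a, b; split; last split.
- by apply: in_row => u v; rewrite /Order.min; case: ifP; [left|right].
- by apply: in_row => u v; rewrite /Order.max; case: ifP; [right|left].
- by move=> x xS; rewrite (ge_bigmin_seq _ _ _ _ xS) ?(le_bigmax_seq _ _ _ _ xS) /=.
Qed.

Lemma normalized_row_extremes_sum S (y a b : int) :
  normalized S -> row_extremes S y a b -> a + b = 0 \/ a + b = -1.
Proof.
move=> [rowS _] /rowS; rewrite /center.
case: ifP => _ /(congr1 ( *%R^~ 2)) /=; rewrite divfK //.
- by rewrite mul0r => /eqP; rewrite intr_eq0 => /eqP; left.
- rewrite mulNr div1r mulVf // => /eqP.
  by rewrite -[-1 : rat]/((-1 : int)%:~R) eqr_int => /eqP; right.
Qed.

Lemma normalized_row_span n S (c x y : int) : optimal n S -> normalized S ->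
  (c, y) \in S -> -c <= x <= c \/ c <= x <= - c - 1 -> (x, y) \in S.
Proof.
move=> optS normS cS xc.
have [a [b ext]] := row_extremes_exist cS.
have ab := normalized_row_extremes_sum normS ext.
case: ext => aS [bS /(_ c cS) /andP[ac cb]].
by apply: (optimal_row_convex optS aS bS); lia.
Qed.

Theorem lemma6 (n : nat) (S : town) :
  optimal n S -> normalized S ->
  (forall (i cm cp : int), 0 <= i -> col_extremes S i cm cp ->
     forall x y : int, -i <= x <= i -> cm <= y <= cp -> (x, y) \in S) /\
  (forall (i cm cp : int), 1 <= i -> col_extremes S (- i) cm cp ->
     forall x y : int, -i <= x <= i - 1 -> cm <= y <= cp -> (x, y) \in S).
Proof.
move=> optS normS; split=> i cm cp _ [cmS [cpS _]] x y xi yc;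
  have iyS := optimal_col_convex optS cmS cpS yc;
  apply: (normalized_row_span optS normS iyS).
- by left.
- by right; rewrite opprK.
Qed.
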